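(* Let $G$ be a finite group, acting on itself by left multiplication. There is a one-to-one correspondence between rank $3$ $G$-invariant matroid structures on $G$ and pairs $(H,\sim)$ consisting of a proper subgroup $H \subseteq G$ and a nontrivial equivalence relation $\sim$ on $G/H - \{\bar{1}\}$ satisfying: (1) if $\bar{a} \sim \bar{b}$ and $\bar{a} \neq \bar{b}$, then $\overline{a^{-1}} \sim \overline{a^{-1}b}$; (2) if $\bar{a} \sim \bar{b}$ and $h \in H$, then $\overline{ha} \sim \overline{hb}$. Furthermore, under this correspondence $H$ is the trivial group if and only if the matroid is simple.
   Context: $G/H$ denotes the set of left cosets of $H$ and $\bar{a}$ denotes the coset $aH$. A matroid on a $G$-set $X$ is $G$-invariant if for every $g \in G$ and every basis $B$, the set $gB$ is again a basis. An equivalence relation is nontrivial if it has at least two equivalence classes. A matroid is simple if every circuit has at least three elements. *)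

From mathcomp Require Import all_boot all_fingroup.
Set Implicit Arguments. Unset Strict Implicit. Unset Printing Implicit Defensive.
Local Open Scope group_scope.

Section Matroid.
Variable T : finType.
Implicit Types (Bs : {set {set T}}) (A B : {set T}).

Definition is_matroid_bases Bs : bool :=
  (Bs != set0) &&
  [forall B1 in Bs, forall B2 in Bs, forall x in B1 :\: B2,
     exists y in B2 :\: B1, (y |: (B1 :\ x)) \in Bs].

Definition indep Bs A : bool := [exists B in Bs, A \subset B].

Definition circuit Bs C : bool :=
  ~~ indep Bs C && [forall x in C, indep Bs (C :\ x)].

Definition has_rank Bs r : bool := [forall B in Bs, #|B| == r].

Definition simple_matroid Bs : bool := [forall C, circuit Bs C ==> (2 < #|C|)].
End Matroid.

Section Groups.
Variable gT : finGroupType.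

Definition G_invariant (Bs : {set {set gT}}) : bool :=
  [forall g : gT, forall B in Bs, (g *: B) \in Bs].

Definition rank3_inv_matroid (Bs : {set {set gT}}) : bool :=
  [&& is_matroid_bases Bs, has_rank Bs 3 & G_invariant Bs].

(* G/H - {1bar} : the left cosets of H other than H itself *)
Definition nontriv_cosets (H : {group gT}) : {set {set gT}} :=
  lcosets H [set: gT] :\ (H : {set gT}).

(* an equivalence relation on D, encoded as its graph R ⊆ D × D *)
Definition equiv_on (D : {set {set gT}}) (R : {set {set gT} * {set gT}}) : bool :=
  [&& R \subset setX D D,
      [forall a in D, (a, a) \in R],
      [forall a, forall b, ((a, b) \in R) ==> ((b, a) \in R)] &
      [forall a, forall b, forall c,
          ((a, b) \in R) && ((b, c) \in R) ==> ((a, c) \in R)]].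

Definition eq_classes (D : {set {set gT}}) (R : {set {set gT} * {set gT}}) :=
  [set [set y in D | (x, y) \in R] | x in D].

Definition nontrivial_equiv (D : {set {set gT}}) R : bool := 1 < #|eq_classes D R|.

Definition good_pair (H : {group gT}) (R : {set {set gT} * {set gT}}) : bool :=
  [&& H \proper [set: gT],
      equiv_on (nontriv_cosets H) R,
      nontrivial_equiv (nontriv_cosets H) R,
      [forall a : gT, forall b : gT,
         ((a *: H, b *: H) \in R) && (a *: H != b *: H) ==>
         ((a^-1 *: H, (a^-1 * b) *: H) \in R)] &
      [forall a : gT, forall b : gT, forall h in H,
         ((a *: H, b *: H) \in R) ==> (((h * a) *: H, (h * b) *: H) \in R)]].
End Groups.

Definition matroid_type (gT : finGroupType) :=
  {Bs : {set {set gT}} | rank3_inv_matroid Bs}.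
Definition pair_type (gT : finGroupType) :=
  {p : {group gT} * {set {set gT} * {set gT}} | good_pair p.1 p.2}.

From mathcomp Require Import all_boot all_fingroup.
Set Implicit Arguments. Unset Strict Implicit. Unset Printing Implicit Defensive.

(* Let M be a rank-3 matroid on G whose bases are permuted by left translations.
   Invariance makes M loopless, and parallelism is transitive, so 1 together with
   the elements parallel to 1 is a subgroup H. Replacing a basis element by a
   parallel one gives a basis, so whether {1, a, c} is a basis depends only on the
   cosets aH and cH, and "{1, a, c} is not a basis" defines a relation ~ on
   G/H - {H}. It is transitive because dependence of {1, a, b} and {1, b, c} puts a
   and c in the closure of the independent pair {1, b}; (1) is the translate of
   {1, a, b} by a^-1, and (2) the translate by h^-1 followed by exchanging h^-1 for
   the parallel element 1. Conversely (H, ~) yields the bases {x, y, z} with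
   x^-1 y H and x^-1 z H distinct from H and unrelated; basis exchange holds because
   the line through 1 and a, namely H together with the class of aH, contains no
   basis. The two constructions are mutually inverse, and H = 1 exactly when M has
   no parallel pairs, i.e. no circuit with two elements. *)

Section ThreeSets.
Variable T : finType.
Implicit Types (A B : {set T}) (x y z : T).

Lemma cards3 x y z : x != y -> y != z -> x != z -> #|[set x; y; z]| = 3.
Proof. by move=> xy yz xz; rewrite -setUA cardsU1 cards2 yz !inE negb_or xy xz. Qed.

Lemma cards3_neq x y z : #|[set x; y; z]| = 3 -> [/\ x != y, y != z & x != z].
Proof.
have card_le2 (u v w : T) : u = v \/ v = w \/ u = w -> #|[set u; v; w]| <= 2.
  case=> [->|[->|->]]; [|rewrite -setUA|rewrite setUAC];
  by rewrite setUid cards2; case: (_ != _).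
move=> c3; split; apply/eqP=> e; suff: 3 <= 2 by [];
  rewrite -c3; apply: card_le2; first [by left | by right; left | by right; right].
Qed.

Lemma card3_set3 B x y z : #|B| = 3 -> x \in B -> y \in B -> z \in B ->
  x != y -> y != z -> x != z -> B = [set x; y; z].
Proof.
move=> cB xB yB zB xy yz xz; apply/esym/eqP; rewrite eqEcard cards3 // cB leqnn andbT.
by apply/subsetP=> w; rewrite !inE -orbA => /or3P[]/eqP->.
Qed.

Lemma cards3P B :
  reflect (exists x y z, [/\ x != y, y != z, x != z & B = [set x; y; z]]) (#|B| == 3).
Proof.
apply: (iffP eqP) => [cB|[x [y [z [xy yz xz ->]]]]]; last exact: cards3.
have /card_gt0P[x xB] : 0 < #|B| by rewrite cB.
have /cards2P[y [z [yz eBx]]] : #|B :\ x| == 2 by move: cB; rewrite (cardsD1 x B) xB add1n => -[->].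
have /setD1P[yx yB] : y \in B :\ x by rewrite eBx !inE eqxx.
have /setD1P[zx zB] : z \in B :\ x by rewrite eBx !inE eqxx orbT.
have xy : x != y by rewrite eq_sym.
have xz : x != z by rewrite eq_sym.
by exists x, y, z; split; last exact: card3_set3.
Qed.

Lemma set3_replace_mid x y z y' : x != y -> y != z ->
  y' |: ([set x; y; z] :\ y) = [set x; y'; z].
Proof.
move=> xy yz; apply/setP=> w; rewrite !inE.
case: (eqVneq w y) => [->|_] /=; last by case: (w == x); case: (w == y'); case: (w == z).
by rewrite orbF (eq_sym y x) (negbTE xy) (negbTE yz) orbF.
Qed.

Lemma card_le2_subset2 A x : x \in A -> #|A| <= 2 -> exists y, A \subset [set x; y].
Proof.
move=> xA; rewrite (cardsD1 x A) xA add1n ltnS => /card_le1P Ax1.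
have [Ax0|[y yAx]] := set_0Vmem (A :\ x).
  exists x; apply/subsetP=> w wA; rewrite !inE orbb; apply: contraT => wx.
  have : w \in A :\ x by rewrite !inE wx wA.
  by rewrite Ax0 inE.
exists y; apply/subsetP=> w wA; rewrite !inE; case: eqP => //= /eqP wx.
have : w \in A :\ x by rewrite !inE wx wA.
by rewrite (Ax1 y yAx) inE.
Qed.

Lemma eq_rank3_families (F1 F2 : {set {set T}}) : has_rank F1 3 -> has_rank F2 3 ->
  (forall x y z, ([set x; y; z] \in F1) = ([set x; y; z] \in F2)) -> F1 = F2.
Proof.
move=> /forall_inP F1_3 /forall_inP F2_3 F12; apply/setP=> B.
have [/cards3P[x [y [z [_ _ _ ->]]]]|nB3] := boolP (#|B| == 3); first exact: F12.
by apply/idP/idP => [/F1_3|/F2_3]; rewrite (negbTE nB3).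
Qed.

End ThreeSets.

Section MatroidBases.
Variable T : finType.
Variable Bs : {set {set T}}.
Implicit Types (A B C S : {set T}) (x y z : T).

Lemma indep_basis A B : B \in Bs -> A \subset B -> indep Bs A.
Proof. by move=> Bin AB; apply/exists_inP; exists B. Qed.

Lemma indepS A A' : A \subset A' -> indep Bs A' -> indep Bs A.
Proof. by move=> AA' /exists_inP[B Bin A'B]; apply: (indep_basis Bin); apply: subset_trans A'B. Qed.

Definition parallel x y := ~~ indep Bs [set x; y].

Lemma basis_not_parallel B x y : B \in Bs -> x \in B -> y \in B -> ~~ parallel x y.
Proof.
move=> Bin xB yB; rewrite negbK; apply: (indep_basis Bin).
by apply/subsetP=> w; rewrite !inE => /orP[]/eqP->.
Qed.

Hypothesis Bs_matroid : is_matroid_bases Bs.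

Lemma indep0 : indep Bs set0.
Proof. by case/andP: Bs_matroid => /set0Pn[B Bin] _; apply: (indep_basis Bin); apply: sub0set. Qed.

Lemma basis_exchange B1 B2 x : B1 \in Bs -> B2 \in Bs -> x \in B1 -> x \notin B2 ->
  exists2 y, y \in B2 :\: B1 & y |: (B1 :\ x) \in Bs.
Proof.
move=> B1in B2in xB1 xB2; case/andP: Bs_matroid => _ /forall_inP/(_ B1 B1in).
move/forall_inP/(_ B2 B2in)/forall_inP/(_ x); rewrite inE xB1 xB2.
by move=> /(_ isT)/exists_inP[y yB21 yB]; exists y.
Qed.

Lemma exists_basis_between B1 B2 S : B1 \in Bs -> B2 \in Bs -> S \subset B1 ->
  exists2 B, B \in Bs & (S \subset B) && (B \subset B2 :|: S).
Proof.
move=> + B2in; have [n] := ubnP #|B1 :\: B2|; elim: n B1 => // n IHn B1 lt_n B1in SB1.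
have [B1B2S|/subsetPn[x xB1]] := boolP (B1 \subset B2 :|: S); first by exists B1; rewrite ?SB1.
rewrite inE negb_or => /andP[xB2 xS].
have [y /setDP[yB2 yB1] B1'in] := basis_exchange B1in B2in xB1 xB2.
apply: (IHn _ _ B1'in); last first.
  apply/subsetP=> w wS; have wx : w != x by apply: contraNneq xS => <-.
  by rewrite !inE wx (subsetP SB1 _ wS) orbT.
rewrite -ltnS; apply: leq_trans lt_n; rewrite ltnS; apply: proper_card; apply/properP; split.
  apply/subsetP=> w; rewrite !inE => /andP[wB2 /orP[/eqP ew|/andP[_ wB1]]].
    by rewrite ew yB2 in wB2.
  by rewrite wB1 wB2.
have xy : x != y by apply: contraNneq yB1 => <-.
by exists x; rewrite !inE ?xB1 ?xB2 ?eqxx //= (negbTE xy).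
Qed.

Section Loopless.
Variable r : nat.
Hypothesis Bs_rank : has_rank Bs r.
Hypothesis loopless : forall x, indep Bs [set x].

Lemma card_basis B : B \in Bs -> #|B| = r.
Proof. by move/(forall_inP Bs_rank)/eqP. Qed.

Lemma parallel_trans x y z : x != z -> parallel x y -> parallel y z -> parallel x z.
Proof.
move=> xz pxy pyz; apply/negP => /exists_inP[B2 B2in xzB2].
have /exists_inP[B1 B1in yB1] := loopless y.
have [B Bin /andP[yB BB2y]] := exists_basis_between B1in B2in yB1.
rewrite sub1set in yB.
have xB : x \notin B by apply: contraL pxy => xB; apply: basis_not_parallel Bin xB yB.
have zB : z \notin B by apply: contraL pyz => zB; apply: basis_not_parallel Bin yB zB.
have sB : B \subset y |: (B2 :\: [set x; z]).
  apply/subsetP=> w wB; move/subsetP: BB2y => /(_ w wB); rewrite !inE.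
  case: eqP => //= _; rewrite orbF => ->; rewrite andbT negb_or.
  by apply/andP; split; [move: xB | move: zB]; apply: contraNneq => <-.
have := subset_leq_card sB; rewrite cardsU1 cardsDS // cards2 xz !card_basis //.
have := subset_leq_card xzB2; rewrite cards2 xz card_basis //.
move=> r_gt1; rewrite -{1}(subnKC r_gt1) leq_add2r.
by case: (_ \notin _).
Qed.

Lemma parallel_exchange B x x' : B \in Bs -> x \in B -> parallel x x' ->
  x' |: (B :\ x) \in Bs.
Proof.
move=> Bin xB pxx'.
have /exists_inP[B1 B1in x'B1] := loopless x'.
have [B' B'in /andP[x'B' B'Bx']] := exists_basis_between B1in Bin x'B1.
rewrite sub1set in x'B'.
have xB' : x \notin B' by apply: contraL pxx' => xB'; apply: basis_not_parallel B'in xB' x'B'.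
have sB' : B' \subset x' |: (B :\ x).
  apply/subsetP=> w wB'; move/subsetP: B'Bx' => /(_ w wB'); rewrite !inE.
  by case: eqP => //= _; rewrite orbF => ->; rewrite andbT; apply: contraNneq xB' => <-.
suff <- : B' = x' |: (B :\ x) by [].
apply/eqP; rewrite eqEcard sB' cardsU1 (card_basis B'in).
have := cardsD1 x B; rewrite xB (card_basis Bin) => ->.
by rewrite leq_add2r leq_b1.
Qed.

Lemma circuit_set2 x y : x != y -> circuit Bs [set x; y] = parallel x y.
Proof.
move=> xy; rewrite /circuit andb_idr // => _; apply/forall_inP=> w.
rewrite !inE => /orP[]/eqP->; [rewrite setU1K | rewrite setUC setU1K];
  by rewrite ?loopless // inE // eq_sym.
Qed.

Lemma simple_matroidP : reflect (forall x y, x != y -> ~~ parallel x y) (simple_matroid Bs).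
Proof.
apply: (iffP forallP) => [simple x y xy | nopar C].
  by have := simple [set x; y]; rewrite circuit_set2 // cards2 xy implybF.
apply/implyP=> /andP[depC _]; rewrite ltnNge; apply: contra depC => C_le2.
have [->|[x xC]] := set_0Vmem C; first exact: indep0.
have [y Cxy] := card_le2_subset2 xC C_le2; apply: indepS Cxy _.
have [<-|xy] := eqVneq x y; first by rewrite setUid.
by have := nopar x y xy; rewrite negbK.
Qed.

End Loopless.

Section Rank3.
Hypothesis Bs_rank3 : has_rank Bs 3.

Lemma set2_sub_basis3 B x y : B \in Bs -> x != y -> [set x; y] \subset B ->
  exists2 z, z \notin [set x; y] & B = [set x; y; z].
Proof.
move=> Bin xy xyB; have cB := card_basis Bs_rank3 Bin.
have /card_gt0P[z /setDP[zB zxy]] : 0 < #|B :\: [set x; y]| by rewrite cardsDS // cards2 xy cB.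
have /andP[xB yB] : (x \in B) && (y \in B) by rewrite -!sub1set -subUset.
exists z; rewrite // -(card3_set3 cB xB yB zB) //.
  by apply: contraNneq zxy => <-; rewrite !inE eqxx orbT.
by apply: contraNneq zxy => <-; rewrite !inE eqxx.
Qed.

Lemma not_basis3_trans x b a c : x != b -> indep Bs [set x; b] ->
  [set x; b; a] \notin Bs -> [set x; b; c] \notin Bs -> [set x; a; c] \notin Bs.
Proof.
move=> xb /exists_inP[B1 B1in xbB1] xbaB xbcB; apply/negP=> xacB.
have [B Bin /andP[xbB BB']] := exists_basis_between B1in xacB xbB1.
have [w wxb eB] := set2_sub_basis3 Bin xb xbB.
have : w \in [set x; a; c] :|: [set x; b] by apply: (subsetP BB'); rewrite eB !inE eqxx orbT.
move: wxb; rewrite !inE => /norP[/negbTE-> /negbTE->]; rewrite /= orbF.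
by case/orP=> /eqP ew; [move: xbaB | move: xbcB]; rewrite -ew -eB Bin.
Qed.

End Rank3.

End MatroidBases.

Local Open Scope group_scope.

Section LeftCosets.
Variable gT : finGroupType.
Implicit Types (a b g x y z : gT) (A C : {set gT}).

Lemma lcoset_set2 g x y : g *: [set x; y] = [set g * x; g * y].
Proof. by rewrite -lcosetE /lcoset imsetU !imset_set1. Qed.

Lemma lcoset_set3 g x y z : g *: [set x; y; z] = [set g * x; g * y; g * z].
Proof. by rewrite -lcosetE /lcoset !imsetU !imset_set1. Qed.

Lemma nontrivial_equiv_witness (D : {set {set gT}}) (R : {set {set gT} * {set gT}}) A C :
  A \in D -> C \in D -> (A, A) \in R -> (C, A) \notin R -> nontrivial_equiv D R.
Proof.
move=> AD CD AA CA; apply/card_gt1P.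
exists [set y in D | (A, y) \in R], [set y in D | (C, y) \in R].
split; [exact: imset_f | exact: imset_f |].
by apply/negP=> /eqP/setP/(_ A); rewrite !inE AD AA (negbTE CA).
Qed.

Variable H : {group gT}.

Lemma eq_lcoset a b : (a *: H == b *: H) = (a^-1 * b \in H).
Proof. by rewrite -mem_lcoset eq_sym; apply/eqP/lcoset_eqP. Qed.

Lemma mem_nontriv_cosets a : (a *: H \in nontriv_cosets H) = (a \notin H).
Proof.
rewrite in_setD1 (_ : a *: H \in _) ?andbT; last by apply/lcosetsP; exists a.
by rewrite -[X in _ != X]lcoset1 eq_lcoset mulg1 groupV.
Qed.

Lemma nontriv_cosetsP A :
  reflect (exists2 a, a \notin H & A = a *: H) (A \in nontriv_cosets H).
Proof.
apply: (iffP idP) => [AD|[a Ha ->]]; last by rewrite mem_nontriv_cosets.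
move: (AD); rewrite inE => /andP[_ /lcosetsP[a _ eA]].
by exists a; rewrite // -mem_nontriv_cosets -eA.
Qed.

End LeftCosets.

Section InvariantMatroid.
Variables (gT : finGroupType) (Bs : {set {set gT}}).
Hypothesis Bs_inv : rank3_inv_matroid Bs.
Implicit Types (a b c g h x y z : gT) (A B : {set gT}).

Let Bs_matroid : is_matroid_bases Bs. Proof. by case/and3P: Bs_inv. Qed.
Let Bs_rank3 : has_rank Bs 3. Proof. by case/and3P: Bs_inv. Qed.

Lemma lcoset_basis g B : B \in Bs -> g *: B \in Bs.
Proof. by case/and3P: Bs_inv => _ _ /forallP/(_ g)/forall_inP; apply. Qed.

Lemma lcoset_basisE g B : (g *: B \in Bs) = (B \in Bs).
Proof. by apply/idP/idP => [/(lcoset_basis g^-1)|/lcoset_basis//]; rewrite lcosetK. Qed.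

Lemma basis3_lmul g x y z : ([set g * x; g * y; g * z] \in Bs) = ([set x; y; z] \in Bs).
Proof. by rewrite -lcoset_set3 lcoset_basisE. Qed.

Lemma indep_lcoset g A : indep Bs (g *: A) = indep Bs A.
Proof.
apply/exists_inP/exists_inP => -[B Bin AB].
  by exists (g^-1 *: B); rewrite ?lcoset_basis // sub_lcosetV.
by exists (g *: B); rewrite ?lcoset_basis // lcosetS.
Qed.

Lemma indep_set1 x : indep Bs [set x].
Proof.
have /andP[/set0Pn[B0 B0in] _] := Bs_matroid.
have /card_gt0P[b bB0] : 0 < #|B0| by rewrite (card_basis Bs_rank3).
apply: (indep_basis (lcoset_basis (x * b^-1) B0in)).
by rewrite sub1set mem_lcoset invMg invgK mulgKV.
Qed.

Lemma parallel_lmul g x y : parallel Bs (g * x) (g * y) = parallel Bs x y.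
Proof. by rewrite /parallel -lcoset_set2 indep_lcoset. Qed.

Definition parallel_class1 := [set g | (1 == g) || parallel Bs 1 g].

Lemma mem_parallel_class1 x y : (x^-1 * y \in parallel_class1) = (x == y) || parallel Bs x y.
Proof. by rewrite inE -(parallel_lmul x) mulg1 mulKVg eq_sym -eq_mulVg1. Qed.

Lemma parallel_class1_group : group_set parallel_class1.
Proof.
apply/group_setP; split=> [|x y]; first by rewrite inE eqxx.
have := mem_parallel_class1 x (x * y); rewrite mulKg => ->.
rewrite inE => /predU1P[<-|p1x]; first by rewrite inE; apply.
case/predU1P=> [<-|pxy]; first by rewrite inE p1x orbT.
rewrite inE; case: eqVneq => //= ne.
exact: (parallel_trans Bs_matroid Bs_rank3 indep_set1 ne p1x pxy).
Qed.

Definition parallel_group := Group parallel_class1_group.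

Local Notation P := parallel_group.
Local Notation D := (nontriv_cosets parallel_group).

Lemma notin_parallel_group a : (a \notin P) = (1 != a) && indep Bs [set 1; a].
Proof. by rewrite inE negb_or negbK. Qed.

Lemma basis_notin_parallel_group B x y : B \in Bs -> x \in B -> y \in B -> x != y ->
  x^-1 * y \notin P.
Proof.
move=> Bin xB yB xy; rewrite /= mem_parallel_class1 negb_or xy.
exact: basis_not_parallel Bin xB yB.
Qed.

Lemma basis_through1 : exists a c, [/\ a \notin P, c \notin P & [set 1; a; c] \in Bs].
Proof.
have /andP[/set0Pn[B Bin] _] := Bs_matroid.
have /cards3P[x [y [z [xy _ xz eB]]]] := forall_inP Bs_rank3 _ Bin.
have [xB yB zB] : [/\ x \in B, y \in B & z \in B] by rewrite eB !inE !eqxx !orbT.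
exists (x^-1 * y), (x^-1 * z); rewrite !(basis_notin_parallel_group Bin) //.
by rewrite -[1](mulVg x) basis3_lmul -eB.
Qed.

Lemma basis3_lcoset_mid x a' a c :
  [set x; a'; c] \in Bs -> a \in a' *: P -> [set x; a; c] \in Bs.
Proof.
move=> Bin; rewrite mem_lcoset /= mem_parallel_class1 => /predU1P[<- // | pa'a].
have [xa' a'c _] := cards3_neq (card_basis Bs_rank3 Bin).
rewrite -(set3_replace_mid a xa' a'c).
by apply: (parallel_exchange Bs_matroid Bs_rank3 indep_set1 Bin _ pa'a); rewrite !inE eqxx orbT.
Qed.

Definition nonbasis_rel : {set {set gT} * {set gT}} :=
  [set p | [&& p.1 \in D, p.2 \in D &
     [forall a in p.1, forall c in p.2, [set 1; a; c] \notin Bs]]].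

Lemma nonbasis_relE a c : a \notin P -> c \notin P ->
  ((a *: P, c *: P) \in nonbasis_rel) = ([set 1; a; c] \notin Bs).
Proof.
move=> Pa Pc; rewrite inE !mem_nontriv_cosets Pa Pc !andTb.
have lcoset_sym u v : u \in v *: P -> v \in u *: P by move/lcoset_eqP->; apply: lcoset_refl.
apply/forall_inP/idP => [rel | acB a' /lcoset_sym aa'].
  exact: (forall_inP (rel a (lcoset_refl P a))) c (lcoset_refl P c).
apply/forall_inP=> c' /lcoset_sym cc'; apply: contra acB => /basis3_lcoset_mid/(_ aa').
by rewrite setUAC => /basis3_lcoset_mid/(_ cc'); rewrite setUAC.
Qed.

Lemma nonbasis_rel_sub : nonbasis_rel \subset setX D D.
Proof. by apply/subsetP=> -[A C]; rewrite !inE => /and3P[-> ->]. Qed.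

Lemma nonbasis_rel_reprs A C : (A, C) \in nonbasis_rel ->
  exists a c, [/\ a \notin P, c \notin P, A = a *: P & C = c *: P].
Proof.
move/(subsetP nonbasis_rel_sub); rewrite inE => /andP[/= AD CD].
have /nontriv_cosetsP[a Pa ->] := AD; have /nontriv_cosetsP[c Pc ->] := CD.
by exists a, c.
Qed.

Lemma nonbasis_rel_lcosets a c :
  (a *: P, c *: P) \in nonbasis_rel -> (a \notin P) && (c \notin P).
Proof. by move/(subsetP nonbasis_rel_sub); rewrite inE !mem_nontriv_cosets. Qed.

Lemma nonbasis_rel_refl a : a \notin P -> (a *: P, a *: P) \in nonbasis_rel.
Proof.
by move=> Pa; rewrite nonbasis_relE //; apply/negP=> /(card_basis Bs_rank3)/cards3_neq[_]; rewrite eqxx.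
Qed.

Lemma nonbasis_rel_equiv : equiv_on D nonbasis_rel.
Proof.
apply/and4P; split; first exact: nonbasis_rel_sub.
- by apply/forall_inP=> _ /nontriv_cosetsP[a Pa ->]; apply: nonbasis_rel_refl.
- apply/forallP=> A; apply/forallP=> C; apply/implyP=> AC.
  have [a [c [Pa Pc eA eC]]] := nonbasis_rel_reprs AC.
  by move: AC; rewrite eA eC !nonbasis_relE // setUAC.
apply/forallP=> A; apply/forallP=> B; apply/forallP=> C; apply/implyP=> /andP[AB BC].
have [a [b [Pa Pb eA eB]]] := nonbasis_rel_reprs AB.
have [_ [c [_ Pc _ eC]]] := nonbasis_rel_reprs BC.
move: AB BC; rewrite eA eB eC !nonbasis_relE // => abB bcB.
move: Pb; rewrite notin_parallel_group => /andP[b1 ind1b].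
by apply: (not_basis3_trans Bs_matroid Bs_rank3 b1 ind1b); rewrite // setUAC.
Qed.

Lemma nonbasis_rel_nontrivial : nontrivial_equiv D nonbasis_rel.
Proof.
have [a [c [Pa Pc acB]]] := basis_through1.
apply: (@nontrivial_equiv_witness _ _ _ (a *: P) (c *: P));
  rewrite ?mem_nontriv_cosets ?nonbasis_rel_refl ?nonbasis_relE //.
by rewrite setUAC acB.
Qed.

Lemma nonbasis_rel_inv a b : (a *: P, b *: P) \in nonbasis_rel -> a *: P != b *: P ->
  (a^-1 *: P, (a^-1 * b) *: P) \in nonbasis_rel.
Proof.
move=> abR; have /andP[Pa Pb] := nonbasis_rel_lcosets abR.
rewrite eq_lcoset => Pab; move: abR; rewrite !nonbasis_relE ?groupV //; apply: contra.
by rewrite -(basis3_lmul a) mulg1 mulgV mulKVg (setUC [set a]).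
Qed.

Lemma nonbasis_rel_lmul a b h : h \in P -> (a *: P, b *: P) \in nonbasis_rel ->
  ((h * a) *: P, (h * b) *: P) \in nonbasis_rel.
Proof.
move=> hP abR; have /andP[Pa Pb] := nonbasis_rel_lcosets abR.
move: abR; rewrite !nonbasis_relE ?groupMl //; apply: contra.
rewrite -(basis3_lmul h^-1) mulg1 !mulKg (setUC [set h^-1]) (setUC [set 1]).
by move/basis3_lcoset_mid; apply; rewrite mem_lcoset invgK mulg1.
Qed.

Lemma good_pair_of_matroid : good_pair P nonbasis_rel.
Proof.
apply/and5P; split.
- have [a [_ [Pa _ _]]] := basis_through1.
  by rewrite properT; apply: contraNneq Pa => ->; rewrite inE.
- exact: nonbasis_rel_equiv.
- exact: nonbasis_rel_nontrivial.
- apply/forallP=> a; apply/forallP=> b; apply/implyP=> /andP[].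
  exact: nonbasis_rel_inv.
apply/forallP=> a; apply/forallP=> b; apply/forall_inP=> h hP; apply/implyP.
exact: nonbasis_rel_lmul.
Qed.

Lemma parallel_class1_trivial : (parallel_class1 == [1 gT]) = simple_matroid Bs.
Proof.
apply/eqP/(simple_matroidP Bs_matroid indep_set1) => [P1 x y xy | nopar].
  by have := mem_parallel_class1 x y; rewrite P1 inE -eq_mulVg1 (negbTE xy) /= => <-.
apply/setP=> g; rewrite !inE; case: (eqVneq 1 g) => [<-//|ne].
by rewrite (negbTE (nopar _ _ ne)).
Qed.

End InvariantMatroid.

Section GoodPair.
Variables (gT : finGroupType) (H : {group gT}) (R : {set {set gT} * {set gT}}).
Hypothesis HR_good : good_pair H R.
Implicit Types (a b c g h u v w x y z : gT) (A B C : {set gT}).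

Local Notation D := (nontriv_cosets H).

Lemma good_pair_sub A C : (A, C) \in R -> (A \in D) && (C \in D).
Proof. by case/and5P: HR_good => _ /and4P[/subsetP sub _ _ _] _ _ _ /sub; rewrite inE. Qed.

Lemma good_pair_refl a : a \notin H -> (a *: H, a *: H) \in R.
Proof.
case/and5P: HR_good => _ /and4P[_ /forall_inP refl _ _] _ _ _ Ha.
by apply: refl; rewrite mem_nontriv_cosets.
Qed.

Lemma good_pair_sym A C : (A, C) \in R -> (C, A) \in R.
Proof. by case/and5P: HR_good => _ /and4P[_ _ /forallP/(_ A)/forallP/(_ C)/implyP sym _] _ _ _. Qed.

Lemma good_pair_trans A B C : (A, B) \in R -> (B, C) \in R -> (A, C) \in R.
Proof.
case/and5P: HR_good => _ /and4P[_ _ _ /forallP/(_ A)/forallP/(_ B)/forallP/(_ C)/implyP tr] _ _ _.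
by move=> AB BC; apply: tr; rewrite AB.
Qed.

Lemma good_pair_inv a b : (a *: H, b *: H) \in R -> a *: H != b *: H ->
  (a^-1 *: H, (a^-1 * b) *: H) \in R.
Proof.
case/and5P: HR_good => _ _ _ /forallP/(_ a)/forallP/(_ b)/implyP inv _ ab ab'.
by apply: inv; rewrite ab.
Qed.

Lemma good_pair_lmul a b h : h \in H -> (a *: H, b *: H) \in R -> ((h * a) *: H, (h * b) *: H) \in R.
Proof. by case/and5P: HR_good => _ _ _ _ /forallP/(_ a)/forallP/(_ b)/forall_inP lmul /lmul/implyP. Qed.

Definition noncollinear x y z := [&& x^-1 * y \notin H, x^-1 * z \notin H &
  ((x^-1 * y) *: H, (x^-1 * z) *: H) \notin R].

Lemma noncollinear_lmul g x y z : noncollinear (g * x) (g * y) (g * z) = noncollinear x y z.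
Proof.
have mulVMM u v : (g * u)^-1 * (g * v) = u^-1 * v by rewrite invMg -mulgA mulKg.
by rewrite /noncollinear !mulVMM.
Qed.

Lemma noncollinear_23 x y z : noncollinear x y z -> noncollinear x z y.
Proof. by case/and3P=> Hy Hz yzR; apply/and3P; split=> //; apply: contra yzR; apply: good_pair_sym. Qed.

Lemma noncollinear_12 x y z : noncollinear x y z -> noncollinear y x z.
Proof.
rewrite /noncollinear.
have -> : y^-1 * x = (x^-1 * y)^-1 by rewrite invMg invgK.
have -> : y^-1 * z = (x^-1 * y)^-1 * (x^-1 * z) by rewrite invMg invgK mulgA mulgK.
move: (x^-1 * y) (x^-1 * z) => a b /and3P[Ha Hb abR]; apply/and3P; split.
- by rewrite groupV.
- by apply: contra abR; rewrite -eq_lcoset => /eqP <-; apply: good_pair_refl.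
by apply: contra abR => /good_pair_inv; rewrite eq_lcoset !invgK mulKVg; apply.
Qed.

Lemma noncollinear_neq x y z : noncollinear x y z -> [/\ x != y, y != z & x != z].
Proof.
case/and3P=> Hy Hz yzR; split.
- by apply: contraNneq Hy => ->; rewrite mulVg group1.
- by apply: contraNneq yzR => ->; apply: good_pair_refl.
by apply: contraNneq Hz => ->; rewrite mulVg group1.
Qed.

Definition matroid_of_pair : {set {set gT}} := [set B : {set gT} | (#|B| == 3) &&
  [forall x in B, forall y in B, forall z in B,
     [&& x != y, y != z & x != z] ==> noncollinear x y z]].

Lemma matroid_of_pair_rank : has_rank matroid_of_pair 3.
Proof. by apply/forall_inP=> B /=; rewrite inE => /andP[]. Qed.

Lemma set3_matroid_of_pair x y z : ([set x; y; z] \in matroid_of_pair) = noncollinear x y z.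
Proof.
apply/idP/idP=> [|xyz].
  rewrite inE => /andP[/eqP/cards3_neq[xy yz xz] /forall_inP/(_ x)].
  by rewrite !inE eqxx => /(_ isT)/forall_inP/(_ y); rewrite !inE eqxx orbT => /(_ isT)
     /forall_inP/(_ z); rewrite !inE eqxx !orbT xy yz xz => /(_ isT).
have [xy yz xz] := noncollinear_neq xyz.
have yxz := noncollinear_12 xyz; have xzy := noncollinear_23 xyz.
have yzx := noncollinear_23 yxz; have zxy := noncollinear_12 xzy.
have zyx := noncollinear_23 zxy.
rewrite inE cards3 //=.
apply/forall_inP=> x'; rewrite !inE -orbA => /or3P[]/eqP->;
  apply/forall_inP=> y'; rewrite !inE -orbA => /or3P[]/eqP->;
  apply/forall_inP=> z'; rewrite !inE -orbA => /or3P[]/eqP->;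
  by rewrite ?eqxx ?andbF //= ?andbT; apply/implyP.
Qed.

Definition on_line a w := (w \in H) || ((a *: H, w *: H) \in R).

Lemma noncollinearE u v w : u^-1 * v \notin H ->
  noncollinear u v w = ~~ on_line (u^-1 * v) (u^-1 * w).
Proof. by rewrite /noncollinear /on_line negb_or => ->. Qed.

Lemma on_line_collinear a y1 y2 y3 : a \notin H ->
  on_line a y1 -> on_line a y2 -> on_line a y3 -> ~~ noncollinear y1 y2 y3.
Proof.
move=> Ha l1 l2 l3; apply/negP=> /and3P[H12 H13 R23].
have [H1|H1] := boolP (y1 \in H).
  have H1V : y1^-1 \in H by rewrite groupV.
  rewrite !(groupMl _ H1V) in H12 H13.
  move: l2 l3; rewrite /on_line (negbTE H12) (negbTE H13) => a2 a3.
  by move: R23; rewrite good_pair_lmul // (good_pair_trans (good_pair_sym a2) a3).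
have a1 : (a *: H, y1 *: H) \in R by move: l1; rewrite /on_line (negbTE H1).
have toV1 w : on_line a w -> y1^-1 * w \notin H -> (y1^-1 *: H, (y1^-1 * w) *: H) \in R.
  case/orP=> [Hw|aw] H1w.
    by rewrite lcosetM (lcoset_id Hw); apply: good_pair_refl; rewrite groupV.
  by apply: good_pair_inv; [apply: good_pair_trans (good_pair_sym a1) aw | rewrite eq_lcoset].
by move: R23; rewrite (good_pair_trans (good_pair_sym (toV1 _ l2 H12)) (toV1 _ l3 H13)).
Qed.

Lemma matroid_of_pair_exchange B1 B2 x :
  B1 \in matroid_of_pair -> B2 \in matroid_of_pair -> x \in B1 -> x \notin B2 ->
  exists2 y, y \in B2 :\: B1 & y |: (B1 :\ x) \in matroid_of_pair.
Proof.
move=> B1M B2M xB1 xB2.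
have /cards3P[p [q [r [_ _ _ eB2]]]] := forall_inP matroid_of_pair_rank _ B2M.
have /cards2P[u [v [uv eB1x]]] : #|B1 :\ x| == 2.
  by have := forall_inP matroid_of_pair_rank _ B1M; rewrite (cardsD1 x) xB1.
have /and3P[_ Huv _] : noncollinear u x v.
  by apply: noncollinear_12; rewrite -set3_matroid_of_pair -setUA -eB1x setD1K.
apply/exists_inP; apply: contraT => /exists_inPn noexch.
have line w : w \in B2 -> on_line (u^-1 * v) (u^-1 * w).
  move=> wB2; have [wB1|wB1] := boolP (w \in B1).
    have : w \in B1 :\ x by rewrite !inE wB1 andbT; apply: contraNneq xB2 => <-.
    rewrite eB1x !inE => /pred2P[]->; first by rewrite /on_line mulVg group1.
    by rewrite /on_line good_pair_refl ?orbT.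
  have := noexch w; rewrite inE wB1 wB2 eB1x => /(_ isT).
  by apply: contraR; rewrite -(noncollinearE _ Huv) -set3_matroid_of_pair setUC.
have [pB2 qB2 rB2] : [/\ p \in B2, q \in B2 & r \in B2] by rewrite eB2 !inE !eqxx !orbT.
have := on_line_collinear Huv (line p pB2) (line q qB2) (line r rB2).
by rewrite noncollinear_lmul -set3_matroid_of_pair -eB2 B2M.
Qed.

Lemma exists_unrelated_pair : exists a c, [/\ a \notin H, c \notin H & (a *: H, c *: H) \notin R].
Proof.
case/and5P: HR_good => _ _ /card_gt1P[_ [_ [/imsetP[A AD ->] /imsetP[C CD ->] neq]]] _ _.
have /nontriv_cosetsP[a Ha eA] := AD; have /nontriv_cosetsP[c Hc eC] := CD.
exists a, c; split=> //; apply: contra neq; rewrite -eA -eC => AC.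
apply/eqP/setP=> E; rewrite !inE; apply/andP/andP=> -[ED rel]; split=> //.
  exact: good_pair_trans (good_pair_sym AC) rel.
exact: good_pair_trans AC rel.
Qed.

Lemma exists_unrelated a : exists2 c, c \notin H & (a *: H, c *: H) \notin R.
Proof.
have [b [c [Hb Hc bc]]] := exists_unrelated_pair.
have [ab|] := boolP ((a *: H, b *: H) \in R); last by exists b.
have [ac|] := boolP ((a *: H, c *: H) \in R); last by exists c.
by move: bc; rewrite (good_pair_trans (good_pair_sym ab) ac).
Qed.

Lemma matroid_of_pair_inv : rank3_inv_matroid matroid_of_pair.
Proof.
apply/and3P; split; [apply/andP; split | exact: matroid_of_pair_rank |].
- have [a [c [Ha Hc ac]]] := exists_unrelated_pair.
  by apply/set0Pn; exists [set 1; a; c]; rewrite set3_matroid_of_pair /noncollinear invg1 !mul1g Ha Hc.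
- apply/forall_inP=> B1 B1M; apply/forall_inP=> B2 B2M; apply/forall_inP=> x /setDP[xB1 xB2].
  by have [y yB21 yB] := matroid_of_pair_exchange B1M B2M xB1 xB2; apply/exists_inP; exists y.
apply/forallP=> g; apply/forall_inP=> B BM.
have /cards3P[x [y [z [_ _ _ eB]]]] := forall_inP matroid_of_pair_rank _ BM.
by move: BM; rewrite eB lcoset_set3 !set3_matroid_of_pair noncollinear_lmul.
Qed.

Lemma parallel_class1_of_pair : parallel_class1 matroid_of_pair = H.
Proof.
apply/setP=> g; rewrite inE /parallel.
case: (eqVneq 1 g) => [<-|g1] /=; first by rewrite group1.
apply/idP/idP => [|Hg].
  apply: contraR => Hg; have [c Hc gc] := exists_unrelated g.
  have gcM : [set 1; g; c] \in matroid_of_pair.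
    by rewrite set3_matroid_of_pair /noncollinear invg1 !mul1g Hg Hc.
  by apply: (indep_basis gcM); apply: subsetUl.
apply/negP=> /exists_inP[B BM gB]; have [z _ eB] := set2_sub_basis3 matroid_of_pair_rank BM g1 gB.
by move: BM; rewrite eB set3_matroid_of_pair /noncollinear invg1 mul1g Hg.
Qed.

Lemma parallel_group_of_pair : parallel_group matroid_of_pair_inv = H.
Proof. by apply: val_inj; rewrite /= parallel_class1_of_pair. Qed.

Lemma nonbasis_rel_of_pair : nonbasis_rel matroid_of_pair_inv = R.
Proof.
have relE a c : a \notin H -> c \notin H ->
    ((a *: H, c *: H) \in nonbasis_rel matroid_of_pair_inv) = ((a *: H, c *: H) \in R).
  move=> Ha Hc; have := @nonbasis_relE _ _ matroid_of_pair_inv.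
  rewrite parallel_group_of_pair => -> //.
  by rewrite set3_matroid_of_pair /noncollinear invg1 !mul1g Ha Hc negbK.
have := nonbasis_rel_sub matroid_of_pair_inv; rewrite parallel_group_of_pair => /subsetP subM.
apply/setP=> -[A C]; have [/andP[/nontriv_cosetsP[a Ha ->] /nontriv_cosetsP[c Hc ->]]|nAC] :=
  boolP ((A \in D) && (C \in D)); first exact: relE.
by apply/idP/idP => [/subM|/good_pair_sub]; rewrite ?in_setX (negbTE nAC).
Qed.

End GoodPair.

Section MatroidRoundTrip.
Variables (gT : finGroupType) (Bs : {set {set gT}}).
Hypothesis Bs_inv : rank3_inv_matroid Bs.

Let Bs_rank3 : has_rank Bs 3. Proof. by case/and3P: Bs_inv. Qed.
Local Notation P := (parallel_group Bs_inv).

Lemma basis3_noncollinear x y z :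
  ([set x; y; z] \in Bs) = noncollinear P (nonbasis_rel Bs_inv) x y z.
Proof.
have lmulE : ([set 1; x^-1 * y; x^-1 * z] \in Bs) = ([set x; y; z] \in Bs).
  by rewrite -(basis3_lmul Bs_inv x^-1) mulVg.
apply/idP/and3P => [xyzB | [Pxy Pxz]]; last by rewrite nonbasis_relE // negbK lmulE.
have [xy yz xz] := cards3_neq (card_basis Bs_rank3 xyzB).
have [xB yB zB] : [/\ x \in [set x; y; z], y \in [set x; y; z] & z \in [set x; y; z]].
  by rewrite !inE !eqxx !orbT.
have Pxy := basis_notin_parallel_group Bs_inv xyzB xB yB xy.
have Pxz := basis_notin_parallel_group Bs_inv xyzB xB zB xz.
by split; rewrite // nonbasis_relE // negbK lmulE.
Qed.

Lemma matroid_of_pair_of_matroid : matroid_of_pair P (nonbasis_rel Bs_inv) = Bs.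
Proof.
apply: eq_rank3_families (matroid_of_pair_rank _ _) Bs_rank3 _ => x y z.
by rewrite (set3_matroid_of_pair (good_pair_of_matroid Bs_inv)) basis3_noncollinear.
Qed.

End MatroidRoundTrip.

Definition pair_of_matroid (gT : finGroupType) (M : matroid_type gT) : pair_type gT :=
  exist _ (parallel_group (svalP M), nonbasis_rel (svalP M)) (good_pair_of_matroid (svalP M)).

Definition matroid_of_good_pair (gT : finGroupType) (p : pair_type gT) : matroid_type gT :=
  exist _ (matroid_of_pair (sval p).1 (sval p).2) (matroid_of_pair_inv (svalP p)).

Lemma pair_of_matroidK (gT : finGroupType) :
  cancel (@pair_of_matroid gT) (@matroid_of_good_pair gT).
Proof. by move=> [Bs Bs_inv]; apply: val_inj; apply: matroid_of_pair_of_matroid. Qed.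

Lemma matroid_of_good_pairK (gT : finGroupType) :
  cancel (@matroid_of_good_pair gT) (@pair_of_matroid gT).
Proof.
move=> [[H R] HR_good]; apply: val_inj => /=.
(* [svalP] is opaque, so the two proofs of invariance are identified by irrelevance. *)
set M_inv := svalP _; rewrite (bool_irrelevance M_inv (matroid_of_pair_inv HR_good)).
by rewrite parallel_group_of_pair nonbasis_rel_of_pair.
Qed.

Theorem corollary3p31 (gT : finGroupType) :
  exists f : matroid_type gT -> pair_type gT,
    bijective f /\
    forall M : matroid_type gT,
      (((sval (f M)).1 : {set gT}) == [1 gT]%g) = simple_matroid (sval M).
Proof.
exists (@pair_of_matroid gT); split.
  exact: Bijective (@pair_of_matroidK gT) (@matroid_of_good_pairK gT).
by move=> M; exact: parallel_class1_trivial (svalP M).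
Qed.
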